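(* Let $\mathcal L_0$ be a recursive language, and $\mathcal L_1,\mathcal L_2$ recursive extensions of $\mathcal L_0$ with $\mathcal L_1\cap\mathcal L_2=\mathcal L_0$. Let $T_0$ be a complete first-order $\mathcal L_0$-theory, and for $i=1,2$ let $T_i$ be a first-order $\mathcal L_i$-theory and $p_i(\bar x)$ an $\mathcal L_i$-type. If $\mathrm{Con}_{\mathrm{sat}}(T_1+p_1{\uparrow}/T_0)$ and $\mathrm{Con}_{\mathrm{sat}}(T_2+p_2{\uparrow}/T_0)$, then there is a countable model of $T_0+T_1+T_2+p_1{\uparrow}+p_2{\uparrow}$.
   Context: A ''type'' $p(\bar x)$ is any set of first-order formulas with free variables among $\bar x$; $p{\uparrow}$ is the $\mathcal L_{\omega_1\omega}$-sentence $\forall\bar x\bigvee_{\psi\in p}\neg\psi(\bar x)$ expressing that $p$ is omitted. For a first-order theory $T_0$ in $\mathcal L$ and a (possibly non-first-order) theory $S$ in an extension $\mathcal L^+$, $\mathrm{Con}_{\mathrm{sat}}(S/T_0)$ means there is a model of $T_0+S$ whose $\mathcal L$-reduct is $\omega$-saturated. *)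

From Stdlib Require Import List Arith.
Import ListNotations.

Inductive rec_code : Type :=
| RZero : rec_code
| RSucc : rec_code
| RProj : nat -> rec_code
| RComp : rec_code -> list rec_code -> rec_code
| RPrim : rec_code -> rec_code -> rec_code
| RMu   : rec_code -> rec_code.

Inductive rec_eval : rec_code -> list nat -> nat -> Prop :=
| ev_zero v : rec_eval RZero v 0
| ev_succ v : rec_eval RSucc v (S (nth 0 v 0))
| ev_proj i v : rec_eval (RProj i) v (nth i v 0)
| ev_comp f gs v w y :
    rec_evals gs v w -> rec_eval f w y -> rec_eval (RComp f gs) v y
| ev_prim0 g h v y : rec_eval g v y -> rec_eval (RPrim g h) (0 :: v) y
| ev_primS g h n v y z :
    rec_eval (RPrim g h) (n :: v) y -> rec_eval h (n :: y :: v) z ->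
    rec_eval (RPrim g h) (S n :: v) z
| ev_mu f v n :
    rec_eval f (n :: v) 0 ->
    (forall m, m < n -> exists k, rec_eval f (m :: v) (S k)) ->
    rec_eval (RMu f) v n
with rec_evals : list rec_code -> list nat -> list nat -> Prop :=
| evs_nil v : rec_evals [] v []
| evs_cons g gs v y ys :
    rec_eval g v y -> rec_evals gs v ys -> rec_evals (g :: gs) v (y :: ys).

Definition recursive_set (A : nat -> Prop) : Prop :=
  exists f : rec_code, forall n,
    (A n -> rec_eval f [n] 1) /\ (~ A n -> rec_eval f [n] 0).

Inductive symbol : Type :=
| FunSym (name arity : nat)
| RelSym (name arity : nat).

Definition cpair (x y : nat) : nat := (x + y) * (x + y + 1) / 2 + y.

Definition symbol_code (s : symbol) : nat :=
  match s with
  | FunSym f n => cpair 0 (cpair f n)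
  | RelSym r n => cpair 1 (cpair r n)
  end.

Definition language := symbol -> Prop.

Definition recursive_language (L : language) : Prop :=
  recursive_set (fun c => exists s, L s /\ symbol_code s = c).

Inductive term : Type :=
| Var (v : nat)
| App (f : nat) (args : list term).

Inductive formula : Type :=
| Eq (t u : term)
| Rel (r : nat) (args : list term)
| Neg (phi : formula)
| And (phi psi : formula)
| Ex (v : nat) (phi : formula).

Fixpoint term_in (L : language) (t : term) : Prop :=
  match t with
  | Var _ => True
  | App f args =>
      L (FunSym f (length args)) /\
      (fix go (l : list term) : Prop :=
         match l with [] => True | t' :: l' => term_in L t' /\ go l' end) args
  end.

Definition terms_in (L : language) (l : list term) : Prop :=
  forall t, In t l -> term_in L t.

Fixpoint formula_in (L : language) (phi : formula) : Prop :=
  match phi with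
  | Eq t u => term_in L t /\ term_in L u
  | Rel r args => L (RelSym r (length args)) /\ terms_in L args
  | Neg p => formula_in L p
  | And p q => formula_in L p /\ formula_in L q
  | Ex _ p => formula_in L p
  end.

Fixpoint term_vars (t : term) : list nat :=
  match t with
  | Var v => [v]
  | App _ args => flat_map term_vars args
  end.

Fixpoint free (v : nat) (phi : formula) : Prop :=
  match phi with
  | Eq t u => In v (term_vars t) \/ In v (term_vars u)
  | Rel _ args => In v (flat_map term_vars args)
  | Neg p => free v p
  | And p q => free v p \/ free v q
  | Ex w p => v <> w /\ free v p
  end.

Definition sentence (phi : formula) : Prop := forall v, ~ free v phi.

(* A structure interprets every symbol; the interpretation of the function
   symbol (f, n) is [funs f] on argument lists of length n (similarly for
   relations).  The L-reduct of a structure is obtained by only looking at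
   L-formulas. *)
Record structure : Type := {
  dom : Type;
  funs : nat -> list dom -> dom;
  rels : nat -> list dom -> Prop
}.

Fixpoint teval (M : structure) (s : nat -> dom M) (t : term) : dom M :=
  match t with
  | Var v => s v
  | App f args => funs M f (map (teval M s) args)
  end.

Definition upd {A : Type} (s : nat -> A) (v : nat) (a : A) : nat -> A :=
  fun w => if Nat.eqb w v then a else s w.

Fixpoint sat (M : structure) (s : nat -> dom M) (phi : formula) : Prop :=
  match phi with
  | Eq t u => teval M s t = teval M s u
  | Rel r args => rels M r (map (teval M s) args)
  | Neg p => ~ sat M s p
  | And p q => sat M s p /\ sat M s q
  | Ex v p => exists a : dom M, sat M (upd s v a) p
  end.

Definition theory := formula -> Prop.

Definition theory_in (L : language) (T : theory) : Prop :=
  forall phi, T phi -> formula_in L phi /\ sentence phi.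

Definition is_model (M : structure) (T : theory) : Prop :=
  inhabited (dom M) /\ forall phi, T phi -> forall s, sat M s phi.

Definition entails (T : theory) (phi : formula) : Prop :=
  forall M, is_model M T -> forall s, sat M s phi.

Definition complete_theory (L : language) (T : theory) : Prop :=
  theory_in L T /\
  forall phi, formula_in L phi -> sentence phi ->
    entails T phi \/ entails T (Neg phi).

Definition is_type (L : language) (p : formula -> Prop) : Prop :=
  exists n, forall phi, p phi ->
    formula_in L phi /\ forall v, free v phi -> v < n.

Definition omits (M : structure) (p : formula -> Prop) : Prop :=
  forall s : nat -> dom M, exists phi, p phi /\ ~ sat M s phi.

(* The L-reduct of M is omega-saturated: every set of L-formulas in the
   variable x_0 with parameters from a finite set (assigned to x_1..x_k by
   s) which is finitely satisfiable in M is realised in M. *)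
Definition omega_saturated (L : language) (M : structure) : Prop :=
  forall (k : nat) (s : nat -> dom M) (Sigma : formula -> Prop),
    (forall phi, Sigma phi ->
       formula_in L phi /\ forall v, free v phi -> v <= k) ->
    (forall l : list formula, (forall phi, In phi l -> Sigma phi) ->
       exists b : dom M, forall phi, In phi l -> sat M (upd s 0 b) phi) ->
    exists b : dom M, forall phi, Sigma phi -> sat M (upd s 0 b) phi.

(* Con_sat(S / T0): some model of T0 + S has an omega-saturated L0-reduct.
   S is given semantically as a class of structures. *)
Definition Con_sat (L0 : language) (T0 : theory) (S : structure -> Prop)
  : Prop :=
  exists M, is_model M T0 /\ S M /\ omega_saturated L0 M.

Definition countable_structure (M : structure) : Prop :=
  exists f : dom M -> nat, forall a b, f a = f b -> a = b.

(* Both models are omega-saturated in L0 and, since T0 is complete, they are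
   L0-elementarily equivalent.  A back-and-forth between them that also adds a
   witness for every existential formula, on either side, produces enumerations
   [a] of part of M1 and [b] of part of M2 with the same L0-type whose ranges are
   elementary substructures (Tarski-Vaught test).  Identifying [a k] with [b k],
   the range of [a] carries an L1-structure from M1 and an L2-structure from M2
   that agree on the common language L0.  Their union is countable, is an elementary
   substructure of M1 in L1 and of M2 in L2, and so models T0, T1, T2 and omits
   p1 and p2. *)
From Stdlib Require Import List Arith Lia Cantor ClassicalEpsilon ProofIrrelevance.
Import ListNotations.

(** * Syntax and semantics *)

Fixpoint term_nested_ind (P : term -> Prop) (HV : forall v, P (Var v))
  (HA : forall f args, Forall P args -> P (App f args)) (t : term) : P t :=
  match t with
  | Var v => HV v
  | App f args => HA f args
      ((fix go (l : list term) : Forall P l :=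
          match l with
          | [] => Forall_nil P
          | t' :: l' => Forall_cons t' (term_nested_ind P HV HA t') (go l')
          end) args)
  end.

Lemma term_in_App L f args :
  term_in L (App f args) <-> L (FunSym f (length args)) /\ Forall (term_in L) args.
Proof.
  simpl. split; intros [H1 H2]; split; auto; clear H1; induction args; simpl in *;
    try constructor; try tauto; inversion H2; subst; tauto.
Qed.

Lemma term_in_mono L L' (HL : forall s, L s -> L' s) t : term_in L t -> term_in L' t.
Proof.
  induction t as [v|f args IH] using term_nested_ind; [simpl; auto|].
  rewrite !term_in_App, !Forall_forall in *. intros [H1 H2]; split; auto.
Qed.

Lemma formula_in_mono L L' (HL : forall s, L s -> L' s) phi :
  formula_in L phi -> formula_in L' phi.
Proof.
  induction phi; simpl; unfold terms_in; intuition eauto using term_in_mono.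
Qed.

Lemma theory_in_mono L L' (HL : forall s, L s -> L' s) T : theory_in L T -> theory_in L' T.
Proof. intros HT phi Hphi. destruct (HT phi Hphi). eauto using formula_in_mono. Qed.

Lemma teval_ext M s s' t :
  (forall v, In v (term_vars t) -> s v = s' v) -> teval M s t = teval M s' t.
Proof.
  induction t as [v|f args IH] using term_nested_ind; simpl; intros H.
  - apply H; auto.
  - f_equal. apply map_ext_in. rewrite Forall_forall in IH. intros a Ha.
    apply IH; auto. intros v Hv; apply H. apply in_flat_map; eauto.
Qed.

Lemma sat_ext M phi : forall s s',
  (forall v, free v phi -> s v = s' v) -> (sat M s phi <-> sat M s' phi).
Proof.
  induction phi; simpl; intros s s' H.
  - rewrite (teval_ext M s s' t), (teval_ext M s s' u); try tauto; auto.
  - rewrite (map_ext_in (teval M s) (teval M s')); [tauto|].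
    intros a Ha; apply teval_ext; intros w Hw; apply H; apply in_flat_map; eauto.
  - rewrite (IHphi s s'); tauto.
  - rewrite (IHphi1 s s'), (IHphi2 s s'); auto; tauto.
  - split; intros [a Ha]; exists a; revert Ha; apply IHphi; intros w Hw;
      unfold upd; destruct (Nat.eqb_spec w v); auto;
      first [apply H; auto | symmetry; apply H; auto].
Qed.

(* Bound variables are renamed to [B], [S B], ... so that they cannot capture
   the images of free variables, all of which lie below [B]. *)
Fixpoint rename_term (r : nat -> nat) (t : term) : term :=
  match t with
  | Var v => Var (r v)
  | App f args => App f (map (rename_term r) args)
  end.

Fixpoint rename (B : nat) (r : nat -> nat) (phi : formula) : formula :=
  match phi with
  | Eq t u => Eq (rename_term r t) (rename_term r u)
  | Rel q args => Rel q (map (rename_term r) args)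
  | Neg p => Neg (rename B r p)
  | And p q => And (rename B r p) (rename B r q)
  | Ex w p => Ex B (rename (S B) (upd r w B) p)
  end.

Lemma teval_rename_term M s rho t :
  teval M s (rename_term rho t) = teval M (fun v => s (rho v)) t.
Proof.
  induction t as [v|f args IH] using term_nested_ind; simpl; auto.
  f_equal. rewrite map_map. apply map_ext_in. rewrite Forall_forall in IH; auto.
Qed.

Lemma term_in_rename_term L rho t : term_in L t -> term_in L (rename_term rho t).
Proof.
  induction t as [v|f args IH] using term_nested_ind; [simpl; auto|].
  change (rename_term rho (App f args)) with (App f (map (rename_term rho) args)).
  rewrite !term_in_App, length_map, Forall_map, !Forall_forall in *.
  intros [H1 H2]; auto.
Qed.

Lemma formula_in_rename L phi : forall B rho,
  formula_in L phi -> formula_in L (rename B rho phi).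
Proof.
  induction phi; simpl; intros B rho; intuition eauto using term_in_rename_term.
  - rewrite length_map; auto.
  - unfold terms_in in *. intros x Hx. apply in_map_iff in Hx.
    destruct Hx as [y [<- Hy]]. auto using term_in_rename_term.
Qed.

Lemma vars_rename_term rho t x :
  In x (term_vars (rename_term rho t)) -> exists u, In u (term_vars t) /\ x = rho u.
Proof.
  induction t as [v|f args IH] using term_nested_ind; simpl.
  - intros [<-|[]]; eauto.
  - rewrite flat_map_concat_map, map_map, <- flat_map_concat_map.
    intros Hx. apply in_flat_map in Hx. destruct Hx as [y [Hy Hx]].
    rewrite Forall_forall in IH. destruct (IH y Hy Hx) as [u [Hu ->]].
    exists u; split; auto. apply in_flat_map; eauto.
Qed.

Lemma free_rename phi : forall B rho x,
  free x (rename B rho phi) -> exists y, free y phi /\ x = rho y.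
Proof.
  induction phi; simpl; intros B rho x Hx.
  - destruct Hx as [Hx|Hx]; apply vars_rename_term in Hx;
      destruct Hx as [y [? ?]]; eauto.
  - rewrite flat_map_concat_map, map_map, <- flat_map_concat_map in Hx.
    apply in_flat_map in Hx. destruct Hx as [y [Hy Hx]].
    apply vars_rename_term in Hx. destruct Hx as [u [Hu ->]].
    exists u; split; auto. apply in_flat_map; eauto.
  - eauto.
  - destruct Hx as [Hx|Hx]; [apply IHphi1 in Hx|apply IHphi2 in Hx];
      destruct Hx as [y [? ?]]; eauto.
  - destruct Hx as [Hne Hx]. apply IHphi in Hx. destruct Hx as [y [Hy Hx]].
    unfold upd in Hx. destruct (Nat.eqb_spec y v); [congruence|]. eauto.
Qed.

Lemma sat_rename M phi : forall B rho s, (forall v, free v phi -> rho v < B) ->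
  (sat M s (rename B rho phi) <-> sat M (fun v => s (rho v)) phi).
Proof.
  induction phi; simpl; intros B rho s H.
  - rewrite !teval_rename_term; tauto.
  - rewrite map_map, (map_ext _ (teval M (fun v => s (rho v)))); [tauto|].
    intros; apply teval_rename_term.
  - rewrite IHphi; auto; tauto.
  - rewrite IHphi1, IHphi2; auto; tauto.
  - split; intros [a Ha]; exists a; revert Ha;
      (rewrite IHphi; [|intros w Hw; unfold upd; destruct (Nat.eqb_spec w v); [lia|];
                        specialize (H w (conj n Hw)); lia]);
      apply sat_ext; intros w Hw; unfold upd; destruct (Nat.eqb_spec w v); subst;
      try rewrite Nat.eqb_refl; auto;
      destruct (Nat.eqb_spec (rho w) B); auto; specialize (H w (conj n Hw)); lia.
Qed.

Definition big_and (l : list formula) : formula := fold_right And (Eq (Var 0) (Var 0)) l.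

Lemma sat_big_and M s l : sat M s (big_and l) <-> forall phi, In phi l -> sat M s phi.
Proof.
  induction l; simpl; [split; auto; contradiction|].
  rewrite IHl. split; [intros [H1 H2] phi [<-|H]; auto|]. intros H; split; auto.
Qed.

Lemma free_big_and l v : free v (big_and l) -> v = 0 \/ exists phi, In phi l /\ free v phi.
Proof.
  induction l; simpl; [intros [[H|[]]|[H|[]]]; auto|].
  intros [H|H]; eauto. destruct (IHl H) as [?|[phi [? ?]]]; eauto.
Qed.

Lemma formula_in_big_and L l :
  (forall phi, In phi l -> formula_in L phi) -> formula_in L (big_and l).
Proof. induction l; simpl; intros H; [split; exact I|]. split; auto. Qed.

Fixpoint free_bound (phi : formula) : nat :=
  match phi with
  | Eq t u => S (list_max (term_vars t ++ term_vars u))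
  | Rel _ args => S (list_max (flat_map term_vars args))
  | Neg p => free_bound p
  | And p q => max (free_bound p) (free_bound q)
  | Ex _ p => free_bound p
  end.

Lemma le_list_max x l : In x l -> x <= list_max l.
Proof.
  intros H. destruct (list_max_le l (list_max l)) as [H1 _].
  specialize (H1 (le_n _)). rewrite Forall_forall in H1. auto.
Qed.

Lemma free_lt_bound phi v : free v phi -> v < free_bound phi.
Proof.
  induction phi; simpl; intros H.
  - assert (In v (term_vars t ++ term_vars u)) by (apply in_or_app; tauto).
    apply le_list_max in H0. lia.
  - apply le_list_max in H. lia.
  - auto.
  - destruct H as [H|H]; [apply IHphi1 in H|apply IHphi2 in H]; lia.
  - destruct H; auto.
Qed.

Lemma map_nth_seq {A B} (e : A -> B) (l : list A) d :
  map (fun i => e (nth i l d)) (seq 0 (length l)) = map e l.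
Proof.
  induction l as [|x l IH]; simpl; auto. f_equal.
  rewrite <- seq_shift, map_map. exact IH.
Qed.

Definition fun_graph (f n : nat) : formula := Eq (Var 0) (App f (map Var (seq 1 n))).
Definition rel_atom (r n : nat) : formula := Rel r (map Var (seq 0 n)).

Lemma sat_fun_graph M s f n :
  sat M s (fun_graph f n) <-> s 0 = funs M f (map (fun i => s (S i)) (seq 0 n)).
Proof. simpl. rewrite map_map, <- seq_shift, map_map. tauto. Qed.

Lemma sat_rel_atom M s r n : sat M s (rel_atom r n) <-> rels M r (map s (seq 0 n)).
Proof. simpl. rewrite map_map. tauto. Qed.

Lemma formula_in_fun_graph L f n : L (FunSym f n) -> formula_in L (fun_graph f n).
Proof.
  intros Hf. split; [exact I|]. rewrite term_in_App, length_map, length_seq.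
  split; auto. rewrite Forall_map, Forall_forall. intros; exact I.
Qed.

Lemma formula_in_rel_atom L r n : L (RelSym r n) -> formula_in L (rel_atom r n).
Proof.
  intros Hr. split; [rewrite length_map, length_seq; auto|].
  intros t Ht. apply in_map_iff in Ht. destruct Ht as [? [<- _]]. exact I.
Qed.

(** * Elementary equivalence of finite tuples *)

Definition tuple_equiv (L : language) (M M' : structure) (dM : dom M) (dM' : dom M')
  (la : list (dom M)) (lb : list (dom M')) : Prop :=
  length la = length lb /\
  forall phi sg, formula_in L phi -> (forall v, free v phi -> sg v < length la) ->
    (sat M (fun v => nth (sg v) la dM) phi <-> sat M' (fun v => nth (sg v) lb dM') phi).

Lemma tuple_equiv_sym L M M' dM dM' la lb :
  tuple_equiv L M M' dM dM' la lb -> tuple_equiv L M' M dM' dM lb la.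
Proof.
  intros [Hl H]; split; auto. intros phi sg H1 H2. symmetry; apply H; auto.
  rewrite Hl; auto.
Qed.

Lemma tuple_equiv_nil L T M M' dM dM' :
  complete_theory L T -> is_model M T -> is_model M' T -> tuple_equiv L M M' dM dM' [] [].
Proof.
  intros [_ Hc] HM HM'. split; [reflexivity|]. intros phi sg HL Hf.
  assert (Hsent : sentence phi) by (intros v Hv; specialize (Hf v Hv); simpl in Hf; lia).
  destruct (Hc phi HL Hsent) as [E|E].
  - split; intros _; apply E; auto.
  - split; intros H; exfalso; [apply (E M HM _ H)|apply (E M' HM' _ H)].
Qed.

Definition tuple_env {D : Type} (x : D) (l : list D) (d : D) : nat -> D :=
  fun v => match v with 0 => x | S i => nth i l d end.

Lemma upd_tuple_env {D : Type} (x y : D) l d v :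
  upd (tuple_env x l d) 0 y v = tuple_env y l d v.
Proof. destruct v; reflexivity. Qed.

(* Position [length l] of [l ++ [x]] is variable 0 of [tuple_env x l d], position
   [k < length l] is variable [S k]. *)
Definition snoc_index (n k : nat) : nat := if Nat.eqb k n then 0 else S k.

Lemma nth_snoc_tuple_env {D : Type} (x : D) l d k :
  k < S (length l) -> nth k (l ++ [x]) d = tuple_env x l d (snoc_index (length l) k).
Proof.
  intros Hk. unfold snoc_index. destruct (Nat.eqb_spec k (length l)) as [->|Hne].
  - apply nth_middle.
  - simpl. apply app_nth1. lia.
Qed.

Definition type_over (L : language) (M : structure) (d c : dom M) (la : list (dom M))
  (phi : formula) : Prop :=
  formula_in L phi /\ (forall v, free v phi -> v <= length la) /\ sat M (tuple_env c la d) phi.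

Lemma type_over_finitely_realized L M M' dM dM' la lb c :
  tuple_equiv L M M' dM dM' la lb ->
  forall l, (forall phi, In phi l -> type_over L M dM c la phi) ->
  exists y, forall phi, In phi l -> sat M' (upd (tuple_env dM' lb dM') 0 y) phi.
Proof.
  intros [Hlen HI] l Hl.
  assert (HL : formula_in L (Ex 0 (big_and l))).
  { apply formula_in_big_and. intros phi Hphi; apply Hl; auto. }
  assert (Hf : forall v, free v (Ex 0 (big_and l)) -> pred v < length la).
  { intros v [Hv0 Hv]. apply free_big_and in Hv.
    destruct Hv as [->|[phi [Hphi Hv]]]; [congruence|].
    destruct (Hl phi Hphi) as [_ [Hb _]]. specialize (Hb v Hv). lia. }
  assert (HM : sat M (fun v => nth (pred v) la dM) (Ex 0 (big_and l))).
  { exists c. rewrite sat_big_and. intros phi Hphi.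
    destruct (Hl phi Hphi) as [_ [_ Hs]]. revert Hs. apply sat_ext.
    intros [|v] _; reflexivity. }
  apply HI in HM; auto. destruct HM as [y Hy]. exists y. intros phi Hphi.
  rewrite sat_big_and in Hy. specialize (Hy phi Hphi). revert Hy. apply sat_ext.
  intros [|v] _; reflexivity.
Qed.

(* A formula about [la ++ [c]] is moved, by renaming its variables along
   [snoc_index], into the type of [c] over [la]. *)
Lemma sat_snoc_of_type_over L M M' dM dM' la lb c d :
  tuple_equiv L M M' dM dM' la lb ->
  (forall phi, type_over L M dM c la phi -> sat M' (tuple_env d lb dM') phi) ->
  forall phi sg, formula_in L phi -> (forall v, free v phi -> sg v < S (length la)) ->
    sat M (fun v => nth (sg v) (la ++ [c]) dM) phi ->
    sat M' (fun v => nth (sg v) (lb ++ [d]) dM') phi.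
Proof.
  intros [Hlen _] Hd phi sg HL Hf Hs.
  set (rho := fun v => snoc_index (length la) (sg v)).
  assert (Hr : forall v, free v phi -> rho v < S (length la)).
  { intros v Hv. specialize (Hf v Hv). unfold rho, snoc_index.
    destruct (Nat.eqb_spec (sg v) (length la)); lia. }
  assert (HS : type_over L M dM c la (rename (S (length la)) rho phi)).
  { split; [apply formula_in_rename; auto|split].
    - intros x Hx. apply free_rename in Hx. destruct Hx as [y [Hy ->]].
      specialize (Hr y Hy). lia.
    - rewrite sat_rename; auto. revert Hs. apply sat_ext. intros v Hv.
      symmetry. apply nth_snoc_tuple_env; auto. }
  apply Hd in HS. rewrite sat_rename in HS; auto. revert HS. apply sat_ext.
  intros v Hv. unfold rho. rewrite Hlen. apply nth_snoc_tuple_env.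
  rewrite <- Hlen; auto.
Qed.

Lemma tuple_equiv_extend L M M' dM dM' la lb :
  omega_saturated L M' -> tuple_equiv L M M' dM dM' la lb ->
  forall c, exists d, tuple_equiv L M M' dM dM' (la ++ [c]) (lb ++ [d]).
Proof.
  intros Hsat Heq c.
  destruct (Hsat (length la) (tuple_env dM' lb dM') (type_over L M dM c la)) as [d Hd].
  - intros phi [HL [Hf _]]; auto.
  - apply (type_over_finitely_realized L M M' dM dM' la lb c Heq).
  - exists d.
    assert (Hd' : forall phi, type_over L M dM c la phi -> sat M' (tuple_env d lb dM') phi).
    { intros phi Hphi. rewrite <- (sat_ext _ _ _ _ (fun v _ => upd_tuple_env dM' d lb dM' v)).
      auto. }
    pose proof (sat_snoc_of_type_over L M M' dM dM' la lb c d Heq Hd') as Key.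
    destruct Heq as [Hlen _].
    split; [rewrite !length_app, Hlen; reflexivity|].
    rewrite length_app, Nat.add_1_r. intros phi sg HL Hf. split; [apply Key; auto|].
    intros H. apply NNPP. intros Hn. apply (Key (Neg phi) sg); auto.
Qed.

(** * Enumeration of witness tasks *)

Lemma to_nat_inj p q : to_nat p = to_nat q -> p = q.
Proof. intros H. rewrite <- (cancel_of_to p), <- (cancel_of_to q), H. reflexivity. Qed.

Arguments to_nat : simpl never.

Definition encode_list {A} (f : A -> nat) : list A -> nat :=
  fix go l := match l with [] => 0 | x :: l' => S (to_nat (f x, go l')) end.

Lemma encode_list_inj {A} (f : A -> nat) l :
  (forall x, In x l -> forall y, f x = f y -> x = y) ->
  forall l', encode_list f l = encode_list f l' -> l = l'.
Proof.
  induction l as [|x l IH]; intros Hf [|y l'] H; simpl in H; try discriminate; auto.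
  injection H as H. apply to_nat_inj in H. injection H as H1 H2.
  f_equal; [apply Hf; simpl; auto|]. apply IH; auto. intros; apply Hf; simpl; auto.
Qed.

Fixpoint encode_term (t : term) : nat :=
  match t with
  | Var v => to_nat (0, v)
  | App f args => to_nat (1, to_nat (f, encode_list encode_term args))
  end.

Lemma encode_term_inj t : forall t', encode_term t = encode_term t' -> t = t'.
Proof.
  induction t as [v|f args IH] using term_nested_ind; intros [v'|f' args'] H;
    simpl in H; apply to_nat_inj in H; injection H; intros; subst; auto; try discriminate.
  apply to_nat_inj in H0. injection H0; intros; subst. f_equal.
  apply (encode_list_inj encode_term); auto. rewrite Forall_forall in IH. auto.
Qed.

Fixpoint encode_formula (phi : formula) : nat :=
  match phi with
  | Eq t u => to_nat (0, to_nat (encode_term t, encode_term u))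
  | Rel r args => to_nat (1, to_nat (r, encode_list encode_term args))
  | Neg p => to_nat (2, encode_formula p)
  | And p q => to_nat (3, to_nat (encode_formula p, encode_formula q))
  | Ex v p => to_nat (4, to_nat (v, encode_formula p))
  end.

Lemma encode_formula_inj phi : forall psi, encode_formula phi = encode_formula psi -> phi = psi.
Proof.
  induction phi; intros [] H; simpl in H; apply to_nat_inj in H; injection H; intros;
    try discriminate; subst.
  - apply to_nat_inj in H0; injection H0; intros. f_equal; apply encode_term_inj; auto.
  - apply to_nat_inj in H0; injection H0; intros; subst. f_equal.
    apply (encode_list_inj encode_term); auto. intros; apply encode_term_inj; auto.
  - f_equal; auto.
  - apply to_nat_inj in H0; injection H0; intros. f_equal; auto.
  - apply to_nat_inj in H0; injection H0; intros; subst. f_equal; auto.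
Qed.

(* A task [(side, phi, v, sl)] asks for a witness of [Ex v phi] in the first
   ([side = true]) or second structure, at the parameters indexed by [sl]. *)
Definition task : Type := (bool * formula * nat * list nat)%type.

Definition encode_task (t : task) : nat :=
  let '(side, phi, v, sl) := t in
  to_nat (Nat.b2n side, to_nat (encode_formula phi, to_nat (v, encode_list (fun x => x) sl))).

Lemma encode_task_inj t t' : encode_task t = encode_task t' -> t = t'.
Proof.
  destruct t as [[[b phi] v] sl], t' as [[[b' phi'] v'] sl']; simpl; intros H.
  apply to_nat_inj in H; injection H as Hb H. apply to_nat_inj in H; injection H as Hp H.
  apply to_nat_inj in H; injection H as Hv H.
  apply encode_formula_inj in Hp. apply encode_list_inj in H; [|auto].
  subst. destruct b, b'; simpl in Hb; try discriminate; auto.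
Qed.

Definition decode_task (n : nat) : task :=
  epsilon (inhabits (true, Eq (Var 0) (Var 0), 0, [])) (fun t => encode_task t = n).

(* Task number [n] is decoded from the first component of the pair coded by [n],
   so that every task comes up infinitely often. *)
Definition task_at (n : nat) : task := decode_task (fst (of_nat n)).

Lemma task_at_infinitely_often t K : exists n, K <= n /\ task_at n = t.
Proof.
  exists (to_nat (encode_task t, K)). split.
  - pose proof (to_nat_non_decreasing (encode_task t) K); lia.
  - unfold task_at, decode_task. rewrite cancel_of_to. simpl.
    apply encode_task_inj. apply (epsilon_spec _ (fun t' => encode_task t' = encode_task t)).
    eauto.
Qed.

(** * Back and forth *)

Definition seq_equiv (L : language) (M M' : structure) (a : nat -> dom M) (b : nat -> dom M')
  : Prop :=
  forall phi sg, formula_in L phi ->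
    (sat M (fun v => a (sg v)) phi <-> sat M' (fun v => b (sg v)) phi).

Definition tv_closed (M : structure) (e : nat -> dom M) : Prop :=
  forall phi v sg, sat M (fun u => e (sg u)) (Ex v phi) ->
    exists k, sat M (upd (fun u => e (sg u)) v (e k)) phi.

Definition witness (M : structure) (d : dom M) (l : list (dom M)) (phi : formula) (v : nat)
  (sl : list nat) : dom M :=
  epsilon (inhabits d) (fun x => sat M (upd (fun u => nth (nth u sl 0) l d) v x) phi).

Lemma witness_spec M d l phi v sl :
  sat M (fun u => nth (nth u sl 0) l d) (Ex v phi) ->
  sat M (upd (fun u => nth (nth u sl 0) l d) v (witness M d l phi v sl)) phi.
Proof. intros H. unfold witness. apply epsilon_spec. exact H. Qed.

Lemma nth_map_seq (sg : nat -> nat) m u : u < m -> nth u (map sg (seq 0 m)) 0 = sg u.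
Proof.
  intros H. rewrite (nth_indep _ _ (sg 0)); [|rewrite length_map, length_seq; auto].
  rewrite map_nth, seq_nth; auto.
Qed.

Section Limit.
Variables (M : structure) (d : dom M) (stage : nat -> list (dom M)).
Hypothesis stage0 : stage 0 = [].
Hypothesis stage_snoc : forall n, exists x, stage (S n) = stage n ++ [x].

Lemma length_stage n : length (stage n) = n.
Proof.
  induction n; [rewrite stage0; reflexivity|].
  destruct (stage_snoc n) as [x ->]. rewrite length_app, IHn. simpl. lia.
Qed.

Definition limit (k : nat) : dom M := nth k (stage (S k)) d.

Lemma nth_stage n k : k < n -> nth k (stage n) d = limit k.
Proof.
  induction n; intros Hk; [lia|]. destruct (Nat.eq_dec k n) as [->|Hne]; [reflexivity|].
  destruct (stage_snoc n) as [x ->]. rewrite app_nth1 by (rewrite length_stage; lia).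
  apply IHn; lia.
Qed.

Lemma limit_snoc n x : stage (S n) = stage n ++ [x] -> limit n = x.
Proof.
  intros E. unfold limit. rewrite E, <- (length_stage n) at 1. apply nth_middle.
Qed.

Hypothesis stage_witness : forall phi v sl K,
  exists n, K <= n /\ stage (S n) = stage n ++ [witness M d (stage n) phi v sl].

Lemma tv_closed_limit : tv_closed M limit.
Proof.
  intros phi v sg Hex.
  set (sl := map sg (seq 0 (free_bound (Ex v phi)))).
  destruct (stage_witness phi v sl (S (list_max sl))) as [n [Hn E]].
  assert (Hsl : forall u, free u (Ex v phi) -> nth (nth u sl 0) (stage n) d = limit (sg u)).
  { intros u Hu. pose proof (free_lt_bound _ _ Hu) as Hm.
    unfold sl. rewrite nth_map_seq by auto. apply nth_stage.
    assert (In (sg u) sl) by (apply in_map, in_seq; lia).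
    pose proof (le_list_max _ _ H). lia. }
  rewrite <- (sat_ext _ _ _ _ Hsl) in Hex. apply witness_spec in Hex.
  exists n. rewrite (limit_snoc n _ E). revert Hex. apply sat_ext.
  intros u Hu. unfold upd. destruct (Nat.eqb_spec u v); [reflexivity|].
  symmetry. apply Hsl. simpl; auto.
Qed.

End Limit.

Lemma seq_equiv_limit L M M' d d' stage stage' :
  stage 0 = [] -> (forall n, exists x, stage (S n) = stage n ++ [x]) ->
  stage' 0 = [] -> (forall n, exists x, stage' (S n) = stage' n ++ [x]) ->
  (forall n, tuple_equiv L M M' d d' (stage n) (stage' n)) ->
  seq_equiv L M M' (limit M d stage) (limit M' d' stage').
Proof.
  intros H0 HS H0' HS' Heq phi sg HL.
  set (K := S (list_max (map sg (seq 0 (free_bound phi))))).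
  assert (Hf : forall v, free v phi -> sg v < K).
  { intros v Hv. pose proof (free_lt_bound _ _ Hv).
    assert (In (sg v) (map sg (seq 0 (free_bound phi)))) by (apply in_map, in_seq; lia).
    pose proof (le_list_max _ _ H1). unfold K; lia. }
  destruct (Heq K) as [_ HI].
  rewrite <- (sat_ext M phi (fun v => nth (sg v) (stage K) d)),
          <- (sat_ext M' phi (fun v => nth (sg v) (stage' K) d')).
  - apply HI; auto. rewrite (length_stage _ _ H0 HS). auto.
  - intros v Hv. apply nth_stage; auto.
  - intros v Hv. apply nth_stage; auto.
Qed.

Section BackAndForth.
Variables (L : language) (M1 M2 : structure) (d1 : dom M1) (d2 : dom M2).
Hypotheses (saturated1 : omega_saturated L M1) (saturated2 : omega_saturated L M2).
Hypothesis equiv_nil : tuple_equiv L M1 M2 d1 d2 [] [].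

Definition match_right (la : list (dom M1)) (lb : list (dom M2)) (c : dom M1) : dom M2 :=
  epsilon (inhabits d2) (fun d => tuple_equiv L M1 M2 d1 d2 (la ++ [c]) (lb ++ [d])).

Definition match_left (la : list (dom M1)) (lb : list (dom M2)) (d : dom M2) : dom M1 :=
  epsilon (inhabits d1) (fun c => tuple_equiv L M1 M2 d1 d2 (la ++ [c]) (lb ++ [d])).

Lemma match_right_spec la lb c : tuple_equiv L M1 M2 d1 d2 la lb ->
  tuple_equiv L M1 M2 d1 d2 (la ++ [c]) (lb ++ [match_right la lb c]).
Proof.
  intros H. unfold match_right. apply epsilon_spec.
  exact (tuple_equiv_extend L M1 M2 d1 d2 la lb saturated2 H c).
Qed.

Lemma match_left_spec la lb d : tuple_equiv L M1 M2 d1 d2 la lb ->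
  tuple_equiv L M1 M2 d1 d2 (la ++ [match_left la lb d]) (lb ++ [d]).
Proof.
  intros H. unfold match_left. apply epsilon_spec.
  destruct (tuple_equiv_extend L M2 M1 d2 d1 lb la saturated1 (tuple_equiv_sym _ _ _ _ _ _ _ H) d)
    as [c Hc].
  exists c. apply tuple_equiv_sym. exact Hc.
Qed.

Definition step (t : task) (p : list (dom M1) * list (dom M2)) :
  list (dom M1) * list (dom M2) :=
  let '(la, lb) := p in
  let '(side, phi, v, sl) := t in
  if side then let c := witness M1 d1 la phi v sl in (la ++ [c], lb ++ [match_right la lb c])
  else let d := witness M2 d2 lb phi v sl in (la ++ [match_left la lb d], lb ++ [d]).

Fixpoint chain (n : nat) : list (dom M1) * list (dom M2) :=
  match n with
  | 0 => ([], [])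
  | S n => step (task_at n) (chain n)
  end.

Lemma chain_equiv n : tuple_equiv L M1 M2 d1 d2 (fst (chain n)) (snd (chain n)).
Proof.
  induction n as [|n IH]; [exact equiv_nil|]. simpl.
  destruct (chain n) as [la lb], (task_at n) as [[[[] phi] v] sl]; simpl in *;
    auto using match_right_spec, match_left_spec.
Qed.

Lemma chain_snoc n :
  (exists c, fst (chain (S n)) = fst (chain n) ++ [c]) /\
  (exists d, snd (chain (S n)) = snd (chain n) ++ [d]).
Proof.
  simpl. destruct (chain n) as [la lb], (task_at n) as [[[[] phi] v] sl];
    simpl; split; eexists; reflexivity.
Qed.

Lemma chain_witness_left phi v sl K : exists n, K <= n /\
  fst (chain (S n)) = fst (chain n) ++ [witness M1 d1 (fst (chain n)) phi v sl].
Proof.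
  destruct (task_at_infinitely_often (true, phi, v, sl) K) as [n [Hn Ht]].
  exists n. split; auto. simpl. rewrite Ht. destruct (chain n); reflexivity.
Qed.

Lemma chain_witness_right phi v sl K : exists n, K <= n /\
  snd (chain (S n)) = snd (chain n) ++ [witness M2 d2 (snd (chain n)) phi v sl].
Proof.
  destruct (task_at_infinitely_often (false, phi, v, sl) K) as [n [Hn Ht]].
  exists n. split; auto. simpl. rewrite Ht. destruct (chain n); reflexivity.
Qed.

Lemma back_and_forth : exists (a : nat -> dom M1) (b : nat -> dom M2),
  seq_equiv L M1 M2 a b /\ tv_closed M1 a /\ tv_closed M2 b.
Proof.
  set (stage1 := fun n => fst (chain n)). set (stage2 := fun n => snd (chain n)).
  assert (snoc1 : forall n, exists c, stage1 (S n) = stage1 n ++ [c])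
    by (intros n; apply chain_snoc).
  assert (snoc2 : forall n, exists d, stage2 (S n) = stage2 n ++ [d])
    by (intros n; apply chain_snoc).
  exists (limit M1 d1 stage1), (limit M2 d2 stage2). split; [|split].
  - apply seq_equiv_limit; auto. intros n; apply chain_equiv.
  - apply tv_closed_limit; auto. intros; apply chain_witness_left.
  - apply tv_closed_limit; auto. intros; apply chain_witness_right.
Qed.

End BackAndForth.

(** * The amalgamated model *)

Lemma seq_equiv_eq L M M' a b :
  seq_equiv L M M' a b -> forall i j, a i = a j <-> b i = b j.
Proof.
  intros H i j. exact (H (Eq (Var 0) (Var 1)) (fun u => match u with 0 => i | _ => j end) (conj I I)).
Qed.

Lemma tv_closed_funs M e : tv_closed M e -> forall f ks, exists k, e k = funs M f (map e ks).
Proof.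
  intros He f ks.
  destruct (He (fun_graph f (length ks)) 0 (fun u => nth (pred u) ks 0)) as [k Hk].
  - exists (funs M f (map e ks)). rewrite sat_fun_graph. unfold upd; simpl.
    rewrite map_nth_seq. reflexivity.
  - exists k. rewrite sat_fun_graph in Hk. unfold upd in Hk; simpl in Hk.
    rewrite map_nth_seq in Hk. exact Hk.
Qed.

Definition index_of {D : Type} (e : nat -> D) (x : D) : nat :=
  epsilon (inhabits 0) (fun k => e k = x).

Lemma index_of_spec {D : Type} (e : nat -> D) x : (exists k, e k = x) -> e (index_of e x) = x.
Proof. intros H. unfold index_of. apply epsilon_spec. exact H. Qed.

(* The amalgam lives on the range of [a]; symbols of [L1] are interpreted as in
   [M1], all others as in [M2], transported along [a k |-> b k]. *)
Section Amalgam.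
Variables (L0 L1 L2 : language) (M1 M2 : structure) (a : nat -> dom M1) (b : nat -> dom M2).
Hypothesis languages_meet : forall s, L1 s /\ L2 s <-> L0 s.
Hypothesis ab_equiv : seq_equiv L0 M1 M2 a b.
Hypothesis a_closed : tv_closed M1 a.
Hypothesis b_closed : tv_closed M2 b.

Definition carrier : Type := {x : dom M1 | exists k, a k = x}.
Definition elt (k : nat) : carrier := exist _ (a k) (ex_intro _ k eq_refl).
Definition val (x : carrier) : dom M1 := proj1_sig x.
Definition idx (x : carrier) : nat := index_of a (val x).
Definition image (x : carrier) : dom M2 := b (idx x).

Definition amalgam_funs (f : nat) (l : list carrier) : carrier :=
  elt (if excluded_middle_informative (L1 (FunSym f (length l)))
       then index_of a (funs M1 f (map val l))
       else index_of b (funs M2 f (map image l))).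

Definition amalgam_rels (r : nat) (l : list carrier) : Prop :=
  if excluded_middle_informative (L1 (RelSym r (length l)))
  then rels M1 r (map val l)
  else rels M2 r (map image l).

Definition amalgam : structure :=
  {| dom := carrier; funs := amalgam_funs; rels := amalgam_rels |}.

Lemma a_idx x : a (idx x) = val x.
Proof. apply index_of_spec. exact (proj2_sig x). Qed.

Lemma val_elt k : val (elt k) = a k.
Proof. reflexivity. Qed.

Lemma carrier_eq (x y : carrier) : val x = val y -> x = y.
Proof. destruct x, y; simpl; intros ->; f_equal; apply proof_irrelevance. Qed.

Lemma image_elt k : image (elt k) = b k.
Proof. apply (seq_equiv_eq _ _ _ _ _ ab_equiv), a_idx. Qed.

Lemma image_inj x y : image x = image y -> x = y.
Proof.
  intros H. apply carrier_eq. rewrite <- !a_idx. apply (seq_equiv_eq _ _ _ _ _ ab_equiv), H.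
Qed.

Lemma funs_M1_in_range f l : exists k, a k = funs M1 f (map val l).
Proof.
  destruct (tv_closed_funs M1 a a_closed f (map idx l)) as [k Hk].
  exists k. rewrite Hk, map_map. f_equal. apply map_ext, a_idx.
Qed.

Lemma funs_M2_in_range f l : exists k, b k = funs M2 f (map image l).
Proof.
  destruct (tv_closed_funs M2 b b_closed f (map idx l)) as [k Hk].
  exists k. rewrite Hk, map_map. reflexivity.
Qed.

Lemma funs_transfer f l k : L0 (FunSym f (length l)) ->
  a k = funs M1 f (map val l) -> b k = funs M2 f (map image l).
Proof.
  intros Hf Hk.
  pose proof (ab_equiv (fun_graph f (length l)) (fun u => nth u (k :: map idx l) 0)
                (formula_in_fun_graph _ _ _ Hf)) as E.
  rewrite !sat_fun_graph in E. simpl in E.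
  rewrite <- (length_map idx l), !map_nth_seq, !map_map in E.
  apply E. rewrite Hk. f_equal. apply map_ext. intros; symmetry; apply a_idx.
Qed.

Lemma rels_transfer r l : L0 (RelSym r (length l)) ->
  (rels M1 r (map val l) <-> rels M2 r (map image l)).
Proof.
  intros Hr.
  pose proof (ab_equiv (rel_atom r (length l)) (fun u => nth u (map idx l) 0)
                (formula_in_rel_atom _ _ _ Hr)) as E.
  rewrite !sat_rel_atom in E.
  rewrite <- (length_map idx l), !map_nth_seq, !map_map in E.
  rewrite <- E. rewrite (map_ext _ _ a_idx). reflexivity.
Qed.

Lemma teval_amalgam_L1 t : term_in L1 t ->
  forall s, val (teval amalgam s t) = teval M1 (fun v => val (s v)) t.
Proof.
  induction t as [v|f args IH] using term_nested_ind; [reflexivity|].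
  rewrite term_in_App. intros [Hf Hargs] s.
  assert (Hm : map val (map (teval amalgam s) args) =
               map (teval M1 (fun v => val (s v))) args).
  { rewrite map_map. apply map_ext_in. rewrite Forall_forall in IH, Hargs. auto. }
  change (val (amalgam_funs f (map (teval amalgam s) args)) =
          funs M1 f (map (teval M1 (fun v => val (s v))) args)).
  unfold amalgam_funs. rewrite length_map.
  destruct (excluded_middle_informative _) as [_|Hn]; [|contradiction].
  rewrite val_elt, index_of_spec by apply funs_M1_in_range. rewrite Hm. reflexivity.
Qed.

Lemma teval_amalgam_L2 t : term_in L2 t ->
  forall s, image (teval amalgam s t) = teval M2 (fun v => image (s v)) t.
Proof.
  induction t as [v|f args IH] using term_nested_ind; [reflexivity|].
  rewrite term_in_App. intros [Hf Hargs] s.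
  assert (Hm : map image (map (teval amalgam s) args) =
               map (teval M2 (fun v => image (s v))) args).
  { rewrite map_map. apply map_ext_in. rewrite Forall_forall in IH, Hargs. auto. }
  change (image (amalgam_funs f (map (teval amalgam s) args)) =
          funs M2 f (map (teval M2 (fun v => image (s v))) args)).
  unfold amalgam_funs. rewrite image_elt, <- Hm.
  destruct (excluded_middle_informative _) as [H1|Hn].
  - apply funs_transfer.
    + apply languages_meet. rewrite length_map in *. auto.
    + apply index_of_spec, funs_M1_in_range.
  - apply index_of_spec, funs_M2_in_range.
Qed.

Lemma sat_amalgam_L1 phi : formula_in L1 phi ->
  forall s, sat amalgam s phi <-> sat M1 (fun v => val (s v)) phi.
Proof.
  induction phi; intros HF s.
  - destruct HF. simpl. rewrite <- !teval_amalgam_L1 by auto.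
    split; [congruence|apply carrier_eq].
  - destruct HF as [Hr Hargs]. simpl. unfold amalgam_rels. rewrite length_map.
    destruct (excluded_middle_informative _) as [_|Hn]; [|contradiction].
    rewrite map_map, (map_ext_in _ (teval M1 (fun v => val (s v)))); [reflexivity|].
    intros t Ht. apply teval_amalgam_L1; auto.
  - simpl. rewrite IHphi; auto. reflexivity.
  - destruct HF. simpl. rewrite IHphi1, IHphi2; auto. reflexivity.
  - simpl. split.
    + intros [x Hx]. exists (val x). rewrite IHphi in Hx; auto. revert Hx.
      apply sat_ext. intros u _. unfold upd. destruct (Nat.eqb u v); reflexivity.
    + intros Hx. change (sat M1 (fun u => val (s u)) (Ex v phi)) in Hx.
      destruct (a_closed phi v (fun u => idx (s u))) as [k Hk].
      * revert Hx. apply sat_ext. intros u _. rewrite a_idx. reflexivity.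
      * exists (elt k). rewrite IHphi; auto. revert Hk. apply sat_ext.
        intros u _. unfold upd. destruct (Nat.eqb u v); [reflexivity|symmetry; apply a_idx].
Qed.

Lemma sat_amalgam_L2 phi : formula_in L2 phi ->
  forall s, sat amalgam s phi <-> sat M2 (fun v => image (s v)) phi.
Proof.
  induction phi; intros HF s.
  - destruct HF. simpl. rewrite <- !teval_amalgam_L2 by auto.
    split; [congruence|apply image_inj].
  - destruct HF as [Hr Hargs]. simpl. unfold amalgam_rels.
    assert (Hm : map image (map (teval amalgam s) args) =
                 map (teval M2 (fun v => image (s v))) args).
    { rewrite map_map. apply map_ext_in. intros t Ht. apply teval_amalgam_L2; auto. }
    rewrite <- Hm. destruct (excluded_middle_informative _) as [H1|Hn]; [|reflexivity].
    apply rels_transfer, languages_meet. rewrite length_map in *. auto.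
  - simpl. rewrite IHphi; auto. reflexivity.
  - destruct HF. simpl. rewrite IHphi1, IHphi2; auto. reflexivity.
  - simpl. split.
    + intros [x Hx]. exists (image x). rewrite IHphi in Hx; auto. revert Hx.
      apply sat_ext. intros u _. unfold upd. destruct (Nat.eqb u v); reflexivity.
    + intros Hx. change (sat M2 (fun u => b (idx (s u))) (Ex v phi)) in Hx.
      destruct (b_closed phi v (fun u => idx (s u)) Hx) as [k Hk].
      exists (elt k). rewrite IHphi; auto. revert Hk. apply sat_ext.
      intros u _. unfold upd. destruct (Nat.eqb u v); [rewrite image_elt; reflexivity|reflexivity].
Qed.

Lemma countable_amalgam : countable_structure amalgam.
Proof.
  exists idx. intros x y E. apply carrier_eq. rewrite <- !a_idx, E. reflexivity.
Qed.

Lemma is_model_amalgam_L1 T : theory_in L1 T -> is_model M1 T -> is_model amalgam T.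
Proof.
  intros HT [_ HM]. split; [exact (inhabits (elt 0))|]. intros phi Hphi s.
  apply sat_amalgam_L1; [apply HT | apply HM]; auto.
Qed.

Lemma is_model_amalgam_L2 T : theory_in L2 T -> is_model M2 T -> is_model amalgam T.
Proof.
  intros HT [_ HM]. split; [exact (inhabits (elt 0))|]. intros phi Hphi s.
  apply sat_amalgam_L2; [apply HT | apply HM]; auto.
Qed.

Lemma omits_amalgam_L1 p : is_type L1 p -> omits M1 p -> omits amalgam p.
Proof.
  intros [n Hp] Hom s. destruct (Hom (fun v => val (s v))) as [phi [Hphi Hn]].
  exists phi. split; auto. rewrite sat_amalgam_L1; auto. apply Hp; auto.
Qed.

Lemma omits_amalgam_L2 p : is_type L2 p -> omits M2 p -> omits amalgam p.
Proof.
  intros [n Hp] Hom s. destruct (Hom (fun v => image (s v))) as [phi [Hphi Hn]].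
  exists phi. split; auto. rewrite sat_amalgam_L2; auto. apply Hp; auto.
Qed.

End Amalgam.

Theorem mainTheorem4 :
  forall (L0 L1 L2 : language) (T0 T1 T2 : theory)
         (p1 p2 : formula -> Prop),
    recursive_language L0 ->
    recursive_language L1 ->
    recursive_language L2 ->
    (forall s, L0 s -> L1 s) ->
    (forall s, L0 s -> L2 s) ->
    (forall s, (L1 s /\ L2 s) <-> L0 s) ->
    complete_theory L0 T0 ->
    theory_in L1 T1 -> is_type L1 p1 ->
    theory_in L2 T2 -> is_type L2 p2 ->
    Con_sat L0 T0 (fun M => is_model M T1 /\ omits M p1) ->
    Con_sat L0 T0 (fun M => is_model M T2 /\ omits M p2) ->
    exists M : structure,
      countable_structure M /\
      is_model M T0 /\ is_model M T1 /\ is_model M T2 /\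
      omits M p1 /\ omits M p2.
Proof.
  intros L0 L1 L2 T0 T1 T2 p1 p2 _ _ _ HL01 _ Hmeet HT0 HT1 Hp1 HT2 Hp2
    [M1 [HM1 [[HT1M1 Hom1] Hsat1]]] [M2 [HM2 [[HT2M2 Hom2] Hsat2]]].
  destruct (proj1 HM1) as [d1], (proj1 HM2) as [d2].
  destruct (back_and_forth L0 M1 M2 d1 d2 Hsat1 Hsat2
              (tuple_equiv_nil L0 T0 M1 M2 d1 d2 HT0 HM1 HM2)) as [a [b [Hab [Ha Hb]]]].
  exists (amalgam L1 M1 M2 a b).
  split; [|split; [|split; [|split; [|split]]]].
  - apply countable_amalgam.
  - apply is_model_amalgam_L1; auto. exact (theory_in_mono L0 L1 HL01 T0 (proj1 HT0)).
  - apply is_model_amalgam_L1; auto.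
  - eapply is_model_amalgam_L2; eauto.
  - apply omits_amalgam_L1; auto.
  - eapply omits_amalgam_L2; eauto.
Qed.
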